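(* Let $k$ be a field and $\mu=\nu=(4,2)$. Then the matrix problem $\mathcal{P}_k(\mu,\nu)$ has at least $|k^\times|$ orbits; in particular it has infinitely many orbits whenever $k$ is infinite (i.e. it is of infinite type).
   Context: For partitions $\mu$ of $m$ and $\nu$ of $n$ and a field $k$, the matrix problem $\mathcal{P}_k(\mu,\nu)$ is the action of the group $C_{GL_m(k)}(J_\mu(0)) \times C_{GL_n(k)}(J_\nu(0))$ on the quotient space $Q = M_{m,n}(k)/\{wJ_\nu(0) - J_\mu(0)w : w\in M_{m,n}(k)\}$ given by $(X,Y)\cdot[v] = [XvY^{-1}]$. Here $J_r(0)$ is the $r\times r$ matrix with $1$ in each $(i+1,i)$ entry and $0$ elsewhere, and $J_\mu(0) = \bigoplus_i J_{\mu_i}(0)$. (Equivalently, $Q$ is the space of $s\times t$ matrices with $(i,j)$ entry in $k[x]/(x^{\min(\mu_i,\nu_j)})$, acted on by the unit groups of $k[x]_\mu$ and $k[x]_\nu$.) *)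

From mathcomp Require Import all_boot all_order all_algebra.
Set Implicit Arguments. Unset Strict Implicit. Unset Printing Implicit Defensive.
Import GRing.Theory.
Local Open Scope ring_scope.

Definition Jblock (k : fieldType) (r : nat) : 'M[k]_r :=
  \matrix_(i < r, j < r) (if i == j.+1 :> nat then 1 else 0).

Fixpoint Jmu (k : fieldType) (mu : seq nat) : 'M[k]_(sumn mu) :=
  match mu return 'M[k]_(sumn mu) with
  | [::] => 0
  | r :: mu' => block_mx (Jblock k r) 0 0 (Jmu k mu')
  end.

Definition in_centralizerGL (k : fieldType) (mu : seq nat)
  (X : 'M[k]_(sumn mu)) : Prop :=
  X \in unitmx /\ X *m Jmu k mu = Jmu k mu *m X.

(* [v] = [v'] in Q = M_{m,n}(k) / { w J_nu(0) - J_mu(0) w }. *)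
Definition Qeq (k : fieldType) (mu nu : seq nat)
  (v v' : 'M[k]_(sumn mu, sumn nu)) : Prop :=
  exists w : 'M[k]_(sumn mu, sumn nu), v - v' = w *m Jmu k nu - Jmu k mu *m w.

Definition same_orbit (k : fieldType) (mu nu : seq nat)
  (v v' : 'M[k]_(sumn mu, sumn nu)) : Prop :=
  exists (X : 'M[k]_(sumn mu)) (Y : 'M[k]_(sumn nu)),
    [/\ @in_centralizerGL k mu X, @in_centralizerGL k nu Y &
        @Qeq k mu nu (X *m v *m invmx Y) v'].

From mathcomp Require Import all_boot all_order all_algebra.
From mathcomp Require Import ring.
Set Implicit Arguments.
Unset Strict Implicit.
Unset Printing Implicit Defensive.
Import GRing.Theory.
Local Open Scope ring_scope.

(* Every element of the centralizer of J = J_(4,2)(0) is block lower-triangular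
   Toeplitz.  Using this, a direct computation shows that on the stratum of Q
   where a0 = a1 = b0 = c0 = 0 (coordinates as in qlow and qtop below), the
   action of (X, Y) multiplies a2, b1, c1, d0 by x y, x' y, x y', x' y', where
   x, x' (resp. y, y') are the diagonal entries of the two blocks of X
   (resp. Y^-1).  Hence a2 d0 / (b1 c1) is an orbit invariant, and it takes
   every value in k. *)

Lemma comm_mx_invmx (R : comUnitRingType) n (A X : 'M[R]_n) :
  X \in unitmx -> comm_mx X A -> comm_mx (invmx X) A.
Proof.
rewrite /comm_mx => uX cXA.
by rewrite -[LHS]mulmx1 -(mulmxV uX) !mulmxA -(mulmxA _ A) -cXA !mulmxA mulVmx // mul1mx.
Qed.

Definition o0 : 'I_6 := @Ordinal 6 0 isT.
Definition o1 : 'I_6 := @Ordinal 6 1 isT.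
Definition o2 : 'I_6 := @Ordinal 6 2 isT.
Definition o3 : 'I_6 := @Ordinal 6 3 isT.
Definition o4 : 'I_6 := @Ordinal 6 4 isT.
Definition o5 : 'I_6 := @Ordinal 6 5 isT.

Lemma sum_ord6 (V : nmodType) (F : 'I_6 -> V) :
  \sum_(i < 6) F i = F o0 + F o1 + F o2 + F o3 + F o4 + F o5.
Proof.
rewrite !big_ord_recl big_ord0 addr0 !addrA.
by repeat congr (_ + _); congr F; apply: val_inj.
Qed.

Lemma ord6_ind (P : 'I_6 -> Prop) :
  P o0 -> P o1 -> P o2 -> P o3 -> P o4 -> P o5 -> forall i, P i.
Proof.
move=> P0 P1 P2 P3 P4 P5 [[|[|[|[|[|[|//]]]]]] lti];
  by rewrite (bool_irrelevance lti isT).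
Qed.

Section Partition42.
Variable k : fieldType.
Local Notation M6 := 'M[k]_6.

Definition J42 : M6 :=
  \matrix_(i, j) (if (i == j.+1 :> nat) && (i != 4 :> nat) then 1 else 0).

Lemma Jmu42E : Jmu k [:: 4%N; 2%N] = J42.
Proof.
apply/matrixP => i j; rewrite /= !mxE.
case: splitP => [i1 -> | i2 ->]; rewrite !mxE; case: splitP => [j1 -> | j2 ->]; rewrite ?mxE.
- by case: i1 => [[|[|[|[|?]]]] ?] //; case: j1 => [[|[|[|[|?]]]] ?].
- by case: i1 => [[|[|[|[|?]]]] ?] //; case: j2 => [[|[|?]] ?].
- case: (splitP i2) => [i3 -> | i3]; rewrite ?mxE; last by case: i3.
  by case: i3 => [[|[|?]] ?] //; case: j1 => [[|[|[|[|?]]]] ?].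
- case: (splitP i2) => [i3 -> | i3]; rewrite ?mxE; last by case: i3.
  case: (splitP j2) => [j3 -> | j3]; rewrite ?mxE; last by case: j3.
  by case: i3 => [[|[|?]] ?] //; case: j3 => [[|[|?]] ?].
Qed.

Definition cent42 (x0 x1 x2 x3 y0 y1 z0 z1 t0 t1 : k) : M6 :=
  \matrix_(i, j)
   match (i : nat), (j : nat) with
   | 0, 0 => x0
   | 1, 0 => x1 | 1, 1 => x0
   | 2, 0 => x2 | 2, 1 => x1 | 2, 2 => x0 | 2, 4 => y0
   | 3, 0 => x3 | 3, 1 => x2 | 3, 2 => x1 | 3, 3 => x0 | 3, 4 => y1 | 3, 5 => y0
   | 4, 0 => z0 | 4, 4 => t0
   | 5, 0 => z1 | 5, 1 => z0 | 5, 4 => t1 | 5, 5 => t0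
   | _, _ => 0
   end.

Lemma mulmx_J42 m (X : 'M[k]_(m, 6)) : X *m J42 = \matrix_(i, j)
  match (j : nat) with 0 => X i o1 | 1 => X i o2 | 2 => X i o3 | 4 => X i o5 | _ => 0 end.
Proof.
apply/matrixP => i; apply: ord6_ind;
  by rewrite !mxE sum_ord6 !mxE /= ?(mulr0, mulr1, addr0, add0r).
Qed.

Lemma mul_J42mx n (X : 'M[k]_(6, n)) : J42 *m X = \matrix_(i, j)
  match (i : nat) with 1 => X o0 j | 2 => X o1 j | 3 => X o2 j | 5 => X o4 j | _ => 0 end.
Proof.
apply/matrixP; apply: ord6_ind => j;
  by rewrite !mxE sum_ord6 !mxE /= ?(mul0r, mul1r, addr0, add0r).
Qed.

Lemma comm_J42E (X : M6) : comm_mx X J42 ->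
  X = cent42 (X o0 o0) (X o1 o0) (X o2 o0) (X o3 o0) (X o2 o4) (X o3 o4)
             (X o4 o0) (X o5 o0) (X o4 o4) (X o5 o4).
Proof.
rewrite /comm_mx mulmx_J42 mul_J42mx => cX.
have E i j := congr1 (fun M : M6 => M i j) cX.
move: (E o0 o0) (E o0 o1) (E o0 o2) (E o0 o3) (E o0 o4) (E o0 o5)
      (E o1 o0) (E o1 o1) (E o1 o2) (E o1 o3) (E o1 o4) (E o1 o5)
      (E o2 o0) (E o2 o1) (E o2 o2) (E o2 o3) (E o2 o4) (E o2 o5)
      (E o3 o0) (E o3 o1) (E o3 o2) (E o3 o3) (E o3 o4) (E o3 o5)
      (E o4 o0) (E o4 o1) (E o4 o2) (E o4 o3) (E o4 o4) (E o4 o5)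
      (E o5 o0) (E o5 o1) (E o5 o2) (E o5 o3) (E o5 o4) (E o5 o5).
rewrite !mxE /= => *.
by apply/matrixP; apply: ord6_ind; apply: ord6_ind; rewrite mxE /=; congruence.
Qed.

(* Superdiagonal sums of the blocks of v, starting from the top-right corner.
   In the k[x]-description of Q, with entries a, b, c, d in positions (1,1),
   (2,1), (1,2), (2,2), the coordinates a_r, b_r, c_r, d_r are the coefficients
   of x^r; they vanish on w J - J w (qcoef_Qeq). *)
Definition qlow (v : M6) : k * k * k * k :=
  (v o0 o3, v o0 o2 + v o1 o3, v o4 o3, v o0 o5).

Definition qtop (v : M6) : k * k * k * k :=
  (v o0 o1 + v o1 o2 + v o2 o3, v o4 o2 + v o5 o3, v o0 o4 + v o1 o5, v o4 o5).

Lemma qcoef_Qeq (v v' w : M6) : v - v' = w *m J42 - J42 *m w ->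
  qlow v = qlow v' /\ qtop v = qtop v'.
Proof.
move=> vv'; rewrite -[v](subrK v') vv' /qlow /qtop mulmx_J42 mul_J42mx !mxE /=.
by split; congr (_, _, _, _); ring.
Qed.

Lemma mulmx3_matrixE (f g : 'I_6 -> 'I_6 -> k) (u : M6) i j :
  (\matrix_(i, j) f i j *m u *m \matrix_(i, j) g i j) i j =
  let fu l := f i o0 * u o0 l + f i o1 * u o1 l + f i o2 * u o2 l +
              f i o3 * u o3 l + f i o4 * u o4 l + f i o5 * u o5 l in
  fu o0 * g o0 j + fu o1 * g o1 j + fu o2 * g o2 j +
  fu o3 * g o3 j + fu o4 * g o4 j + fu o5 * g o5 j.
Proof. by rewrite mxE sum_ord6 !mxE !sum_ord6 !mxE. Qed.

Lemma qlow_act (X W u : M6) : comm_mx X J42 -> comm_mx W J42 ->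
  qlow u = (0, 0, 0, 0) -> qlow (X *m u *m W) = (0, 0, 0, 0).
Proof.
move=> /comm_J42E -> /comm_J42E -> [u03 /addr0_eq u13 u43 u05].
rewrite /qlow /cent42 !mulmx3_matrixE /=.
by rewrite -u13 u03 u43 u05; congr (_, _, _, _); ring.
Qed.

Lemma qtop_act (X W u : M6) a b c d : comm_mx X J42 -> comm_mx W J42 ->
  qlow u = (0, 0, 0, 0) -> qtop u = (a, b, c, d) ->
  qtop (X *m u *m W) = (X o0 o0 * W o0 o0 * a, X o4 o4 * W o0 o0 * b,
                        X o0 o0 * W o4 o4 * c, X o4 o4 * W o4 o4 * d).
Proof.
move=> /comm_J42E -> /comm_J42E -> [u03 /addr0_eq u13 u43 u05] [<- <- <- <-].
rewrite /qtop /cent42 !mulmx3_matrixE !mxE /=.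
by rewrite -u13 u03 u43 u05; congr (_, _, _, _); ring.
Qed.

Lemma comm_J42_unit_diag (X : M6) : X \in unitmx -> comm_mx X J42 ->
  (X o0 o0 != 0) && (X o4 o4 != 0).
Proof.
move=> uX cX; move: (mulmxV uX) (comm_mx_invmx uX cX); set Y := invmx X => XY cY.
have e i := congr1 (fun M : M6 => M i i) XY.
move: (e o0) (e o4); rewrite (comm_J42E cX) (comm_J42E cY) /cent42 !(mxE, sum_ord6) /=.
rewrite ?(mulr0, mul0r, addr0, add0r) => e0 e4.
have : (X o0 o0 * Y o0 o0 != 0) && (X o4 o4 * Y o4 o4 != 0) by rewrite e0 e4 oner_neq0.
by rewrite !mulf_eq0 !negb_or => /andP[/andP[-> _] /andP[-> _]].
Qed.

(* Junk value 0 off the stratum qlow = 0 (and, by x / 0 = 0, when b c = 0). *)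
Definition orbit_param (v : M6) : k :=
  if qlow v == (0, 0, 0, 0) then let: (a, b, c, d) := qtop v in a * d / (b * c)
  else 0.

Lemma orbit_param_stratum (v : M6) a b c d :
  qlow v = (0, 0, 0, 0) -> qtop v = (a, b, c, d) -> orbit_param v = a * d / (b * c).
Proof. by rewrite /orbit_param => -> ->; rewrite eqxx. Qed.

Lemma orbit_param_Qeq (v v' w : M6) : v - v' = w *m J42 - J42 *m w ->
  orbit_param v = orbit_param v'.
Proof. by case/qcoef_Qeq; rewrite /orbit_param => -> ->. Qed.

Lemma orbit_param_act (X W u : M6) :
  X \in unitmx -> comm_mx X J42 -> W \in unitmx -> comm_mx W J42 ->
  orbit_param (X *m u *m W) = orbit_param u.
Proof.
move=> uX cX uW cW.
have [u0 | u0] := eqVneq (qlow u) (0, 0, 0, 0); last first.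
  have XuW0 : qlow (X *m u *m W) != (0, 0, 0, 0).
    apply: contra u0 => /eqP/(qlow_act (comm_mx_invmx uX cX) (comm_mx_invmx uW cW)).
    by rewrite !mulmxA mulVmx // mul1mx -mulmxA mulmxV // mulmx1 => ->.
  by rewrite /orbit_param (negbTE u0) (negbTE XuW0).
case ut : (qtop u) => [[[a b] c] d].
rewrite (orbit_param_stratum (qlow_act cX cW u0) (qtop_act cX cW u0 ut)).
rewrite (orbit_param_stratum u0 ut).
have /andP[x0 x4] := comm_J42_unit_diag uX cX.
have /andP[w0 w4] := comm_J42_unit_diag uW cW.
set p := X o0 o0 * X o4 o4 * W o0 o0 * W o4 o4.
have -> : X o0 o0 * W o0 o0 * a * (X o4 o4 * W o4 o4 * d) = p * (a * d) by rewrite /p; ring.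
have -> : X o4 o4 * W o0 o0 * b * (X o0 o0 * W o4 o4 * c) = p * (b * c) by rewrite /p; ring.
by rewrite -mulf_div divff ?mul1r // !mulf_neq0.
Qed.

Lemma orbit_param_same_orbit (u v : 'M[k]_(sumn [:: 4%N; 2%N])) :
  same_orbit u v -> orbit_param u = orbit_param v.
Proof.
case=> X [Y [[uX cX] [uY cY] [w]]]; rewrite Jmu42E in cX cY * => Qv.
rewrite -(orbit_param_Qeq Qv) orbit_param_act //.
  by rewrite unitmx_inv.
exact: comm_mx_invmx.
Qed.

Definition orbit_rep (a : k) : M6 := \matrix_(i, j)
  match (i : nat), (j : nat) with 0, 1 | 4, 2 | 0, 4 => 1 | 4, 5 => a | _, _ => 0 end.

Lemma orbit_param_rep a : orbit_param (orbit_rep a) = a.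
Proof.
rewrite (@orbit_param_stratum _ 1 1 1 a).
- by rewrite mul1r mulr1 divr1.
- by rewrite /qlow !mxE /= addr0.
- by rewrite /qtop !mxE /= !(addr0, add0r).
Qed.

End Partition42.

Theorem mainTheorem7 (k : fieldType) :
  (exists f : k -> 'M[k]_(sumn [:: 4%N; 2%N], sumn [:: 4%N; 2%N]),
     forall a b : k, a != 0 -> b != 0 ->
       @same_orbit k [:: 4%N; 2%N] [:: 4%N; 2%N] (f a) (f b) -> a = b)
  /\
  ((forall s : seq k, exists x : k, x \notin s) ->
   forall s : seq 'M[k]_(sumn [:: 4%N; 2%N], sumn [:: 4%N; 2%N]),
     exists v, forall u, u \in s -> ~ @same_orbit k [:: 4%N; 2%N] [:: 4%N; 2%N] u v).
Proof.
split=> [|k_infinite s].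
  by exists (@orbit_rep k) => a b _ _ /orbit_param_same_orbit; rewrite !orbit_param_rep.
have [a a_new] := k_infinite [seq orbit_param u | u <- s].
exists (orbit_rep a) => u su /orbit_param_same_orbit; rewrite orbit_param_rep => ua.
by rewrite -ua map_f in a_new.
Qed.
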